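(* Let $S_{N-2}$ denote the set $\{\pi\in S_N:\pi(1)=2,\ \pi(2)=1\}$, let $\gamma_{ij}\in S_N$ denote the transposition exchanging $i$ and $j$ (with $\gamma_{ii}$ the identity), and for $\pi\in S_{N-2}$ and $a_+,a_-,b_+,b_-\in\{1,\dots,N\}$ define $T_{a_+a_-b_+b_-}(\pi)=\gamma_{2b_+}\gamma_{2a_+}\pi\gamma_{2a_-}\gamma_{2b_-}$ (composition of maps). If $(\pi,a_+,a_-,b_+,b_-)$ is uniform on $S_{N-2}\times\{1,\dots,N\}\times\{2,\dots,N\}^3$, then $T_{a_+a_-b_+b_-}(\pi)$ is uniform on $S_N$. Moreover, \[(T_{a_+a_-b_+b_-}(\pi))(1)=a_+,\qquad(T_{a_+a_-b_+b_-}(\pi))^{-1}(1)=a_-,\] provided that $|\{1,2,a_+,a_-,b_+,b_-\}|=6$. *)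

(* Points 1..N of the paper are the elements 0..N-1 of 'I_N,
   with N = n.+2 (N >= 2 so that the points 1 and 2 exist). *)
From mathcomp Require Import all_boot all_order all_algebra all_fingroup.
Set Implicit Arguments. Unset Strict Implicit. Unset Printing Implicit Defensive.
Import GRing.Theory Num.Theory.
Local Open Scope ring_scope.

Definition e1 {n : nat} : 'I_n.+2 := ord0.
Definition e2 {n : nat} : 'I_n.+2 := inord 1.

Definition Sm2 (n : nat) : {set {perm 'I_n.+2}} :=
  [set p : {perm 'I_n.+2} | (p e1 == e2) && (p e2 == e1)].

Definition gamma {n : nat} (i j : 'I_n.+2) : {perm 'I_n.+2} := tperm i j.

(* T_{a+ a- b+ b-}(pi) = gamma_{2b+} o gamma_{2a+} o pi o gamma_{2a-} o gamma_{2b-}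
   (composition of maps).  In MathComp, (s * t) x = t (s x), so the map
   composition f o g is written g * f. *)
Definition Tmap {n : nat} (ap am bp bm : 'I_n.+2) (p : {perm 'I_n.+2})
  : {perm 'I_n.+2} :=
  gamma e2 bm * gamma e2 am * p * gamma e2 ap * gamma e2 bp.

(* Sample space S_{N-2} x {1..N} x {2..N}^3; tuple (((pi, a+), a-), b+), b-) *)
Definition Omega (n : nat)
  : {set {perm 'I_n.+2} * 'I_n.+2 * 'I_n.+2 * 'I_n.+2 * 'I_n.+2} :=
  [set x | [&& x.1.1.1.1 \in Sm2 n, x.1.1.2 != e1, x.1.2 != e1 & x.2 != e1]].

(* The pushforward of the uniform distribution on the finite nonempty set D
   under f is the uniform distribution on Y:
   P_D(f = y) = #{x in D | f x = y} / #D = 1 / #Y for every y. *)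
Definition pushforward_uniform (X Y : finType) (D : {set X}) (f : X -> Y) : Prop :=
  forall y : Y,
    (#|[set x in D | f x == y]|%:R / #|D|%:R : rat) = (#|Y|%:R)^-1.

From mathcomp Require Import all_boot all_order all_algebra all_fingroup.
Set Implicit Arguments. Unset Strict Implicit. Unset Printing Implicit Defensive.
Import GRing.Theory Num.Theory.

(* For fixed [b+, b-], the map (pi, a+, a-) |-> gamma_{2a+} pi gamma_{2a-}
   from S_{N-2} x {1..N} x {2..N} to S_N is a bijection: a+ is recovered as
   the image of 1, a- as the preimage of 1 (or of 2 when a+ = 1), and then pi
   by undoing the two transpositions.  Multiplying on both sides by the
   gamma's with the b's is a bijection of S_N as well, so every permutation
   has exactly (N-1)^2 preimages under T, and T pushes the uniform law
   forward to the uniform law. *)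

Lemma pushforward_uniform_const_fibers (X Y : finType) (D : {set X})
    (f : X -> Y) (k : nat) :
  (0 < k)%N -> (forall y, #|[set x in D | f x == y]| = k) ->
  pushforward_uniform D f.
Proof.
move=> k_gt0 fiberE y.
have cardD : #|D| = (#|Y| * k)%N.
  rewrite -sum1_card (partition_big f predT) //= -sum_nat_const.
  by apply: eq_bigr => z _; rewrite -(fiberE z) -sum1_card; apply: eq_bigl => x; rewrite inE.
rewrite fiberE cardD natrM invfM mulrCA divff ?mulr1 //.
by rewrite pnatr_eq0 -lt0n.
Qed.

Lemma e1_neq_e2 n : (@e1 n) != e2.
Proof. by apply/eqP => /(congr1 val); rewrite /= inordK. Qed.

Section TransformT.
Variable n : nat.
Local Notation I := 'I_n.+2.
Local Notation g := (@gamma n e2).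

Lemma gamma_sandwichK (a b : I) (s : {perm I}) : (g a * (g a * s * g b) * g b)%g = s.
Proof. by rewrite !mulgA tperm2 mul1g -mulgA tperm2 mulg1. Qed.

Lemma gamma_e1 (a : I) : a != e1 -> g a e1 = e1.
Proof. by move=> a1; rewrite tpermD // eq_sym e1_neq_e2. Qed.

Definition Tcore (x : {perm I} * I * I) : {perm I} := (g x.2 * x.1.1 * g x.1.2)%g.

Definition Tcore_dom : {set {perm I} * I * I} :=
  [set x | (x.1.1 \in Sm2 n) && (x.2 != e1)].

Definition Tcore_ap (s : {perm I}) : I := s e1.

Definition Tcore_am (s : {perm I}) : I :=
  (s^-1)%g (if Tcore_ap s == e1 then e2 else e1).

Definition Tcore_inv (s : {perm I}) : {perm I} * I * I :=
  ((g (Tcore_am s) * s * g (Tcore_ap s))%g, Tcore_ap s, Tcore_am s).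

Lemma TmapE (c : {perm I} * I * I) bp bm :
  Tmap c.1.2 c.2 bp bm c.1.1 = (g bm * Tcore c * g bp)%g.
Proof. by rewrite /Tmap /Tcore !mulgA. Qed.

Lemma Tcore_inv_dom s : Tcore_inv s \in Tcore_dom.
Proof.
have s_am : s (Tcore_am s) = if Tcore_ap s == e1 then e2 else e1 by rewrite permKV.
have am1 : Tcore_am s != e1.
  apply/eqP => am_e1; move: s_am; rewrite am_e1 -/(Tcore_ap s).
  by case: eqP => [-> /eqP|ap1 /ap1//]; apply/negP; rewrite e1_neq_e2.
rewrite !inE /= am1 !permM gamma_e1 // -/(Tcore_ap s) tpermR eqxx /= tpermL s_am andbT.
by case: (Tcore_ap s =P e1) => [->|/eqP ap1]; rewrite ?tpermL ?gamma_e1.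
Qed.

Lemma Tcore_invK : cancel Tcore_inv Tcore.
Proof. by move=> s; rewrite /Tcore /= gamma_sandwichK. Qed.

Lemma TcoreK : {in Tcore_dom, cancel Tcore Tcore_inv}.
Proof.
move=> [[p ap] am]; rewrite !inE /= => /andP[/andP[/eqP p1 /eqP p2] am1].
have s_ap : Tcore_ap (Tcore (p, ap, am)) = ap.
  by rewrite /Tcore_ap !permM gamma_e1 // p1 tpermL.
have s_am : Tcore_am (Tcore (p, ap, am)) = am.
  rewrite /Tcore_am s_ap; apply: (canLR (permK _)); rewrite !permM tpermR p2.
  by case: eqP => [->|/eqP ap1]; rewrite ?tpermR ?gamma_e1.
by rewrite /Tcore_inv s_ap s_am /Tcore /= gamma_sandwichK.
Qed.

Lemma OmegaE (c : {perm I} * I * I) bp bm :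
  ((c, bp, bm) \in Omega n) = [&& c \in Tcore_dom, bp != e1 & bm != e1].
Proof. by rewrite !inE -!andbA. Qed.

Lemma Tmap_fiber (y : {perm I}) :
  [set x in Omega n | Tmap x.1.1.1.2 x.1.1.2 x.1.2 x.2 x.1.1.1.1 == y] =
  (fun b => (Tcore_inv (g b.2 * y * g b.1), b.1, b.2)) @: setX [set~ e1] [set~ e1].
Proof.
apply/setP => -[[c bp] bm]; rewrite inE OmegaE TmapE.
apply/andP/imsetP => [[/and3P[cD bp1 bm1] /eqP <-] | [[bp' bm']]].
  exists (bp, bm); first by rewrite in_setX !inE bp1 bm1.
  by rewrite gamma_sandwichK TcoreK.
rewrite in_setX !in_setC1 => /andP[bp1 bm1] [-> -> ->].
by rewrite Tcore_inv_dom bp1 bm1 Tcore_invK gamma_sandwichK.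
Qed.

Lemma card_Tmap_fiber (y : {perm I}) :
  #|[set x in Omega n | Tmap x.1.1.1.2 x.1.1.2 x.1.2 x.2 x.1.1.1.1 == y]| =
  (n.+1 * n.+1)%N.
Proof.
rewrite Tmap_fiber card_in_imset ?cardsX ?cardsC1 ?card_ord //.
by move=> [bp bm] [bp' bm'] _ _ /(congr1 (fun x => (x.1.2, x.2))).
Qed.

Lemma Tmap_e1 p ap am bp bm : p \in Sm2 n -> am != e1 -> bm != e1 ->
  ap != e2 -> ap != bp -> Tmap ap am bp bm p e1 = ap.
Proof.
rewrite inE => /andP[/eqP p1 _] am1 bm1 ap2 apbp.
by rewrite !permM !gamma_e1 // p1 tpermL tpermD // eq_sym.
Qed.

Lemma Tmap_am p ap am bp bm : p \in Sm2 n -> ap != e1 -> bp != e1 ->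
  am != e2 -> am != bm -> Tmap ap am bp bm p am = e1.
Proof.
rewrite inE => /andP[_ /eqP p2] ap1 bp1 am2 ambm.
by rewrite !permM (@tpermD _ e2 bm am) 1?eq_sym // tpermR p2 !gamma_e1.
Qed.

End TransformT.

Theorem lemma7p1 (n : nat) :
  pushforward_uniform (Omega n)
    (fun x => Tmap x.1.1.1.2 x.1.1.2 x.1.2 x.2 x.1.1.1.1)
  /\
  (forall (p : {perm 'I_n.+2}) (ap am bp bm : 'I_n.+2),
      (p, ap, am, bp, bm) \in Omega n ->
      #|[set e1; e2; ap; am; bp; bm]| = 6 ->
      Tmap ap am bp bm p e1 = ap /\ (invg (Tmap ap am bp bm p)) e1 = am).
Proof.
split.
  apply: (pushforward_uniform_const_fibers (k := (n.+1 * n.+1)%N)) => //.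
  exact: card_Tmap_fiber.
move=> p ap am bp bm; rewrite OmegaE /Tcore_dom in_set /= => /and3P[/andP[pS am1] bp1 bm1].
move=> card6; have : uniq [:: e1; e2; ap; am; bp; bm].
  by apply/card_uniqP; rewrite [size _]/= -card6; apply: eq_card => x; rewrite !inE !orbA.
rewrite /= !inE !negb_or -!andbA.
case/and5P=> _ e1ap _ _ /and5P[_ e2ap e2am _ /and5P[_ _ apbp _ /and4P[_ ambm _ _]]].
split; first by rewrite Tmap_e1 // eq_sym.
by rewrite -(Tmap_am (ap := ap) pS _ bp1 _ ambm) ?permK // eq_sym.
Qed.
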